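(* Let $n>2k$ and $k\ge 3$ be integers. Let $f^*(n,k)$ denote the maximum of $\min\{|\mathcal A|,|\mathcal B|\}$ over all pairs $\mathcal A,\mathcal B\subset\binom{[n]}{k}$ such that $\mathcal A\cap\mathcal B=\emptyset$, $\mathcal A$ and $\mathcal B$ are cross-intersecting, and neither $\mathcal A$ nor $\mathcal B$ is a star. Then $$f^*(n,k)\ge\left\lfloor\frac12\left(\binom{n-1}{k-1}-\binom{n-2k}{k-1}\right)\right\rfloor+1.$$
   Context: $[n]=\{1,\dots,n\}$ and $\binom{[n]}{k}$ is the collection of all $k$-element subsets of $[n]$. Families $\mathcal A,\mathcal B$ are cross-intersecting if $A\cap B\neq\emptyset$ for all $A\in\mathcal A$, $B\in\mathcal B$. A family $\mathcal F$ is a star if there is $x\in[n]$ with $x\in F$ for all $F\in\mathcal F$. *)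

From mathcomp Require Import all_boot.
Set Implicit Arguments. Unset Strict Implicit. Unset Printing Implicit Defensive.

(* Ground set [n] is modelled as 'I_n = {0,...,n-1}. *)
Definition family (n : nat) := {set {set 'I_n}}.

Definition uniform n k (F : family n) : bool :=
  [forall S in F, #|S| == k].

Definition cross_intersecting n (A B : family n) : bool :=
  [forall S in A, forall T in B, S :&: T != set0].

Definition is_star n (F : family n) : bool :=
  [exists x : 'I_n, forall S in F, x \in S].

Definition admissible n k (AB : family n * family n) : bool :=
  [&& uniform k AB.1, uniform k AB.2,
      AB.1 :&: AB.2 == set0,
      cross_intersecting AB.1 AB.2,
      ~~ is_star AB.1 & ~~ is_star AB.2].

(* f^*(n,k): maximum of min(|A|,|B|) over admissible pairs (0 if none). *)
Definition fstar (n k : nat) : nat :=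
  \max_(AB : family n * family n | admissible k AB) minn #|AB.1| #|AB.2|.

(* Fix z and two k-sets A0, B0 not containing z with A0 :&: B0 = {c}.  Let F
   be the k-sets through z meeting A0 :|: B0, and P (resp. Q) the members of F
   missing A0 (resp. B0).  P and Q are disjoint and equinumerous, so F splits
   into halves A containing P and B containing Q.  Members of B meet A0, members
   of A meet B0, and A, B share z, so A0 |: A and B0 |: B are
   cross-intersecting; neither is a star, since z |: (B0 :\ c) lies in P and
   misses A0, and symmetrically.  Finally #|F| = 'C(n-1, k-1) - 'C(n-2k, k-1):
   the k-sets through z, minus those avoiding the 2k-1 points of A0 :|: B0. *)

From mathcomp Require Import all_boot zify.

Set Implicit Arguments.
Unset Strict Implicit.
Unset Printing Implicit Defensive.

Lemma card_ord_interval n a b :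
  b <= n -> #|[set i : 'I_n | a <= i < b]| = b - a.
Proof.
elim: b => [|b IHb] lt_bn.
  by apply: eq_card0 => i; rewrite inE ltn0 andbF.
have [le_ab|lt_ba] := leqP a b; last first.
  have -> : b.+1 - a = 0 by lia.
  by apply: eq_card0 => i; rewrite !inE; apply/negbTE/negP; lia.
have -> : [set i : 'I_n | a <= i < b.+1] =
    Ordinal lt_bn |: [set i : 'I_n | a <= i < b].
  by apply/setP => -[i lt_in]; rewrite !inE -val_eqE /=; apply/idP/idP; lia.
by rewrite cardsU1 IHb ?(ltnW lt_bn) // inE /= ltnn andbF; lia.
Qed.

Section StarsAvoiding.
Variable T : finType.

Definition star_avoiding (z : T) k (Y : {set T}) : {set {set T}} :=
  [set A : {set T} | [&& #|A| == k, z \in A & [disjoint A & Y]]].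

Lemma star_avoidingS z k (Y Y' : {set T}) :
  Y \subset Y' -> star_avoiding z k Y' \subset star_avoiding z k Y.
Proof.
move=> sYY'; apply/subsetP => A; rewrite !inE => /and3P [-> -> dA] /=.
exact: disjointWr dA.
Qed.

Lemma card_star_avoiding z k (Y : {set T}) : z \notin Y -> 0 < k ->
  #|star_avoiding z k Y| = 'C(#|T|.-1 - #|Y|, k.-1).
Proof.
move=> zY k_gt0; pose D := ~: (z |: Y).
have zD : z \notin D by rewrite !inE eqxx.
have -> : star_avoiding z k Y =
    (fun B => z |: B) @: [set B : {set T} | B \subset D & #|B| == k.-1].
  apply/setP => A; rewrite inE; apply/and3P/imsetP.
    move=> [/eqP cA zA dAY]; exists (A :\ z); last by rewrite setD1K.
    rewrite inE; apply/andP; split.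
      apply/subsetP => x; rewrite !inE => /andP [xz xA].
      by rewrite negb_or xz (disjointFr dAY xA).
    by move: (cardsD1 z A); rewrite zA; lia.
  move=> [B]; rewrite inE => /andP [sBD /eqP cB] ->.
  have zB : z \notin B by apply: contra zD; apply: subsetP.
  split; first by rewrite cardsU1 zB cB; apply/eqP; lia.
    exact: setU11.
  rewrite -setI_eq0 setIUl setU_eq0 !setI_eq0 disjoints1 zY /=.
  apply: disjointWl sBD _.
  by rewrite disjoint_sym disjoints_subset setCK subsetUr.
rewrite card_in_imset ?cards_draws; last first.
  move=> A B; rewrite !inE => /andP [sAD _] /andP [sBD _] eAB.
  have zA : z \notin A by apply: contra zD; apply: subsetP.
  have zB : z \notin B by apply: contra zD; apply: subsetP.
  by rewrite -(setU1K zA) eAB setU1K.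
congr 'C(_, _); move: (cardsC (z |: Y)); rewrite cardsU1 zY -/D; lia.
Qed.

End StarsAvoiding.

Lemma ex_subset_card (T : finType) (R : {set T}) m :
  m <= #|R| -> exists2 R1 : {set T}, R1 \subset R & #|R1| = m.
Proof.
elim: m => [|m IHm] ltmR; first by exists set0; rewrite ?sub0set ?cards0.
have [R1 sR1R cR1] := IHm (ltnW ltmR).
have /properP [_ [x xR xR1]] : R1 \proper R by rewrite properEcard sR1R cR1.
exists (x |: R1); last by rewrite cardsU1 xR1 cR1.
by rewrite subUset sub1set xR sR1R.
Qed.

Lemma ex_subset_half (T : finType) (F P Q : {set T}) :
  P \subset F -> Q \subset F -> [disjoint P & Q] -> #|P| = #|Q| ->
  exists A : {set T}, [/\ P \subset A, A \subset F :\: Q & #|A| = #|F| %/ 2].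
Proof.
move=> sPF sQF dPQ cPQ; pose R := F :\: (P :|: Q).
have cPuQ (X : {set T}) : [disjoint P & X] -> #|P :|: X| = #|P| + #|X|.
  by rewrite -setI_eq0 cardsU => /eqP ->; rewrite cards0 subn0.
have leF : #|P| + #|Q| <= #|F|.
  by rewrite -cPuQ // subset_leq_card // subUset sPF sQF.
have cR : #|R| = #|F| - #|P| - #|Q|.
  by rewrite cardsD (setIidPr _) ?subUset ?sPF // cPuQ // subnDA.
have [|R1 sR1R cR1] := @ex_subset_card _ R (#|F| %/ 2 - #|P|).
  by rewrite cR; lia.
have dPR1 : [disjoint P & R1].
  apply: disjointWr sR1R _; rewrite disjoint_sym disjoints_subset.
  by apply/subsetP => x; rewrite !inE negb_or => /andP [/andP [->]].
exists (P :|: R1); split; first exact: subsetUl.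
  rewrite subUset; apply/andP; split.
    by rewrite subsetD sPF.
  by apply: subset_trans sR1R _; rewrite setDS // subsetUr.
by rewrite cPuQ // cR1; lia.
Qed.

Lemma avoiding_meeting_witness (T : finType) (z c : T) k (Y Y' : {set T}) :
  1 < k -> #|Y'| = k -> Y :&: Y' = [set c] -> z \notin Y -> z \notin Y' ->
  z |: (Y' :\ c) \in star_avoiding z k Y :\: star_avoiding z k (Y :|: Y').
Proof.
move=> k_gt1 cY' YY' zY zY'.
have cY'c : c \in Y' by move: (set11 c); rewrite -YY' => /setIP [].
have zY'c : z \notin Y' :\ c by rewrite inE negb_and zY' orbT.
have cardY'c : #|Y' :\ c| = k.-1 by move: (cardsD1 c Y'); rewrite cY'c cY'; lia.
have dY'cY : [disjoint Y' :\ c & Y].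
  rewrite disjoints_subset; apply/subsetP => x /setD1P [xc xY'].
  rewrite inE; apply: contra xc => xY.
  by rewrite -in_set1 -YY' inE xY xY'.
have [x xY'c] : exists x, x \in Y' :\ c.
  by apply/set0Pn; rewrite -card_gt0 cardY'c; lia.
rewrite inE; apply/andP; split.
  rewrite inE; apply/negP => /and3P [_ _ /disjointFr /(_ (setU1r z xY'c))].
  by case/setD1P: xY'c => _ xY'; rewrite inE xY' orbT.
rewrite inE cardsU1 zY'c cardY'c setU11 -setI_eq0 setIUl setU_eq0 !setI_eq0.
by rewrite disjoints1 zY dY'cY andbT; apply/eqP; lia.
Qed.

Lemma setU1I_eq0 (T : finType) (x y : T) (G H : {set T}) :
  x != y -> x \notin H -> y \notin G -> [disjoint G & H] ->
  (x |: G) :&: (y |: H) = set0.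
Proof.
move=> xy xH yG dGH; apply/eqP; rewrite setI_eq0 disjoint_sym disjoints_subset.
apply/subsetP => t /setU1P [->|tH]; rewrite !inE negb_or.
  by rewrite eq_sym xy yG.
by rewrite (disjointFl dGH tH) andbT; apply: contraNneq xH => <-.
Qed.

Section Families.
Variables n k : nat.
Implicit Types (X Y : {set 'I_n}) (G H : {set {set 'I_n}}).

Lemma uniformS G H : G \subset H -> uniform k H -> uniform k G.
Proof.
move=> sGH /forall_inP uH; apply/forall_inP => X XG.
exact: uH (subsetP sGH X XG).
Qed.

Lemma uniformU1 X G : #|X| = k -> uniform k G -> uniform k (X |: G).
Proof.
move=> cX /forall_inP uG; apply/forall_inP => Y /setU1P [->|YG].
  by rewrite cX.
exact: uG.
Qed.

Lemma cross_intersecting_common (x : 'I_n) G H :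
  {in G, forall X, x \in X} -> {in H, forall Y, x \in Y} ->
  cross_intersecting G H.
Proof.
move=> xG xH; apply/forall_inP => X XG; apply/forall_inP => Y YH.
by apply/set0Pn; exists x; rewrite inE xG ?xH.
Qed.

Lemma cross_intersectingU1 X Y G H :
  X :&: Y != set0 -> {in H, forall Y1, X :&: Y1 != set0} ->
  {in G, forall X1, X1 :&: Y != set0} -> cross_intersecting G H ->
  cross_intersecting (X |: G) (Y |: H).
Proof.
move=> XY XH GY /forall_inP GH.
apply/forall_inP => X1 /setU1P [->|X1G].
all: apply/forall_inP => Y1 /setU1P [->|Y1H].
- exact: XY.
- exact: XH.
- exact: GY.
- exact: (forall_inP (GH X1 X1G)).
Qed.

Lemma not_star_disjoint X Y G :
  X \in G -> Y \in G -> [disjoint X & Y] -> ~~ is_star G.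
Proof.
move=> XG YG dXY; apply/existsP => -[x /forall_inP xG].
by move: (disjointFr dXY (xG X XG)); rewrite xG.
Qed.

End Families.

Section NonStarPair.
Variables (n k : nat) (z c : 'I_n) (A0 B0 : {set 'I_n}).
Implicit Types (X Y : {set 'I_n}) (A : {set {set 'I_n}}).
Hypotheses (k_gt1 : 1 < k) (card_A0 : #|A0| = k) (card_B0 : #|B0| = k)
  (A0_B0 : A0 :&: B0 = [set c]) (z_A0 : z \notin A0) (z_B0 : z \notin B0).

Let S := A0 :|: B0.
(* [F set0], [F A0] and [F B0] are the families F, P and Q above. *)
Let F Y := star_avoiding z k Y :\: star_avoiding z k S.

Let z_S : z \notin S. Proof. by rewrite inE negb_or z_A0. Qed.

Let card_S : #|S| = (2 * k).-1.
Proof. by rewrite cardsU A0_B0 cards1 card_A0 card_B0; lia. Qed.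

Let card_F Y : Y \subset S ->
  #|F Y| = 'C(n.-1 - #|Y|, k.-1) - 'C(n.-1 - #|S|, k.-1).
Proof.
move=> sYS; have zY : z \notin Y by apply: contra z_S; apply: subsetP.
rewrite cardsD (setIidPr (star_avoidingS _ _ sYS)).
by rewrite !card_star_avoiding ?card_ord //; lia.
Qed.

Let F_sub Y : F Y \subset F set0.
Proof. by rewrite setSD // star_avoidingS ?sub0set. Qed.

Let uniform_F : uniform k (F set0).
Proof. by apply/forall_inP => X /setDP [+ _]; rewrite inE => /and3P []. Qed.

Let z_F : {in F set0, forall X, z \in X}.
Proof. by move=> X /setDP [+ _]; rewrite inE => /and3P []. Qed.

Let F_meet Y X : X \in F set0 -> X \notin F Y -> X :&: Y != set0.
Proof.
move=> /setDP [XF0 XS]; rewrite in_setD XS setI_eq0; apply: contra => dXY.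
by move: XF0; rewrite !inE => /and3P [-> -> _].
Qed.

Let disjoint_FA0_FB0 : [disjoint F A0 & F B0].
Proof.
rewrite disjoints_subset; apply/subsetP => X /setDP [XA0 XS].
rewrite inE in_setD XS /=; apply: contra XS.
move: XA0; rewrite !inE => /and3P [-> -> dXA0] /and3P [_ _ dXB0].
by rewrite -setI_eq0 setIUr setU_eq0 !setI_eq0 dXA0 dXB0.
Qed.

Let A0_B0_neq : A0 != B0.
Proof.
apply: contraTneq k_gt1 => eA0B0.
by move: card_A0; rewrite -[A0]setIid {2}eA0B0 A0_B0 cards1 => <-.
Qed.

Let admissible_split A : F A0 \subset A -> A \subset F set0 :\: F B0 ->
  admissible k (A0 |: A, B0 |: F set0 :\: A).
Proof.
move=> /subsetP sFA0A /subsetP sAF.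
have sAF0 : A \subset F set0 by apply/subsetP => X /sAF /setDP [].
have A0_F0 : A0 \notin F set0 by apply: contra z_A0 => /z_F.
have B0_A : B0 \notin A by apply: contra z_B0 => /sAF /setDP [/z_F].
have wA := avoiding_meeting_witness k_gt1 card_B0 A0_B0 z_A0 z_B0.
have wB := avoiding_meeting_witness k_gt1 card_A0
  (etrans (setIC _ _) A0_B0) z_B0 z_A0.
rewrite [B0 :|: A0]setUC -/S -/(F B0) in wB.
have wB_A : z |: (A0 :\ c) \in F set0 :\: A.
  rewrite in_setD (subsetP (F_sub B0) _ wB) andbT.
  by apply/negP => /sAF /setDP []; rewrite wB.
have uA : uniform k (A0 |: A) := uniformU1 card_A0 (uniformS sAF0 uniform_F).
have uB : uniform k (B0 |: F set0 :\: A).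
  exact: uniformU1 card_B0 (uniformS (subsetDl _ _) uniform_F).
have disjAB : (A0 |: A) :&: (B0 |: F set0 :\: A) == set0.
  rewrite setU1I_eq0 //; first by apply: contra A0_F0 => /setDP [].
  by rewrite disjoints_subset; apply/subsetP => X XA; rewrite !inE XA.
have crossAB : cross_intersecting (A0 |: A) (B0 |: F set0 :\: A).
  apply: cross_intersectingU1.
  - by apply/set0Pn; exists c; rewrite A0_B0 set11.
  - move=> X /setDP [XF0 XA]; rewrite setIC F_meet //.
    by apply: contra XA; apply: sFA0A.
  - by move=> X /sAF /setDP [XF0 XB0]; apply: F_meet.
  apply: (@cross_intersecting_common _ z) => X.
    by move/(subsetP sAF0); apply: z_F.
  by case/setDP => /z_F.
have nsA : ~~ is_star (A0 |: A).
  apply: (not_star_disjoint (setU11 _ _) (setU1r _ (sFA0A _ wA))).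
  by case/setDP: wA; rewrite inE disjoint_sym => /and3P [].
have nsB : ~~ is_star (B0 |: F set0 :\: A).
  apply: (not_star_disjoint (setU11 _ _) (setU1r _ wB_A)).
  by case/setDP: wB; rewrite inE disjoint_sym => /and3P [].
by rewrite /admissible /= uA uB disjAB crossAB nsA nsB.
Qed.

Lemma fstar_lower_bound :
  ('C(n.-1, k.-1) - 'C(n - 2 * k, k.-1)) %/ 2 + 1 <= fstar n k.
Proof.
have card_F0 : #|F set0| = 'C(n.-1, k.-1) - 'C(n - 2 * k, k.-1).
  rewrite card_F ?sub0set // cards0 subn0 card_S.
  by have -> : n.-1 - (2 * k).-1 = n - 2 * k by lia.
have card_FA0_FB0 : #|F A0| = #|F B0|.
  by rewrite !card_F ?subsetUl ?subsetUr // card_A0 card_B0.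
have [A [sFA0A sAF cardA]] :=
  ex_subset_half (F_sub A0) (F_sub B0) disjoint_FA0_FB0 card_FA0_FB0.
apply: leq_trans (leq_bigmax_cond _ (admissible_split sFA0A sAF)) => /=.
have sAF0 : A \subset F set0 by apply: subset_trans sAF (subsetDl _ _).
have A0_A : A0 \notin A by apply: contra z_A0 => /(subsetP sAF0) /z_F.
have B0_FA : B0 \notin F set0 :\: A by apply: contra z_B0 => /setDP [/z_F].
rewrite !cardsU1 A0_A B0_FA cardsD (setIidPr sAF0) cardA -card_F0 leq_min.
move: #|F set0| => m; rewrite addnC leqnn leq_add2l leq_subRL ?leq_div //.
by rewrite addnn -muln2 leq_divM.
Qed.

End NonStarPair.

Theorem proposition2p2 (n k : nat) (hnk : 2 * k < n) (hk : 3 <= k) :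
  ('C(n.-1, k.-1) - 'C(n - 2 * k, k.-1)) %/ 2 + 1 <= fstar n k.
Proof.
have lt0n : 0 < n by lia.
have ltkn : k < n by lia.
pose A0 := [set i : 'I_n | 1 <= i < k.+1].
pose B0 := [set i : 'I_n | k <= i < 2 * k].
apply: (@fstar_lower_bound _ _ (Ordinal lt0n) (Ordinal ltkn) A0 B0).
- by lia.
- by rewrite card_ord_interval //; lia.
- by rewrite card_ord_interval //; lia.
- by apply/setP => i; rewrite !inE -val_eqE /=; lia.
- by rewrite inE.
- by rewrite inE /=; lia.
Qed.
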